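(* Let $(X,I,T)$ be a relative monad in a 2-category $\mathcal{K}$ with $I,T\colon X_0\to X$, unit $t$ and extension $(-)^\dagger$. Let $U\colon\mathrm{Mod}^T(-)\to\mathcal{K}(-,X)$ be the forgetful 2-natural transformation $(M,(-)^m)\mapsto M$, let $F\colon\mathcal{K}(-,X_0)\to\mathrm{Mod}^T(-)$ send $M\colon K\to X_0$ to $(TM,(-)^{\dagger})$, where the operator is $h\mapsto h^\dagger$ for $h\colon IA\Rightarrow TMB$, and let $I_*=I\circ-\colon\mathcal{K}(-,X_0)\to\mathcal{K}(-,X)$. Then $F$ and $U$ form a relative adjunction $F\,{}_{I_*}\!\dashv U$ in $\hat{\mathcal{K}}=[\mathcal{K}^{op},\mathbf{Cat}]$ with unit the modification with components $tM\colon IM\Rightarrow TM$; in particular for every $K$, $M\colon K\to X_0$ and $(N,(-)^n)\in\mathrm{Mod}^T(K)$ the map $\mathrm{Mod}^T(K)(FM,(N,(-)^n))\to\mathcal{K}[K,X](IM,N)$, $g\mapsto g\cdot tM$, is a bijection with inverse $f\mapsto f^n$. Moreover the relative monad induced by this relative adjunction is $(\mathcal{K}(-,X),I_*,T_* )$ with $T_*=T\circ-$, i.e. the relative monad in $\hat{\mathcal{K}}$ whose unit and extension are given componentwise by $t$ and $(-)^\dagger$.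
   Context: Conventions: $\mathcal{K}[O,Z]$ denotes a hom-category; 1-cells compose by juxtaposition; vertical composition of 2-cells is written $\cdot$; whiskering by juxtaposition. Operator: given 1-cells $F\colon X\to Z$, $G\colon Y\to Z$, $F'\colon X\to Z'$, $G'\colon Y\to Z'$, an operator $(-)^\#\colon[F,G]\to[F',G']$ is a family of functions, indexed by spans $A\colon O\to X$, $B\colon O\to Y$, $(-)^\#_{A,B}\colon\mathcal{K}[O,Z](FA,GB)\to\mathcal{K}[O,Z'](F'A,G'B)$, with $(fP)^\#=f^\#P$, $(f\cdot F\alpha)^\#=f^\#\cdot F'\alpha$, $(G\beta\cdot f)^\#=G'\beta\cdot f^\#$ for all 1-cells $P\colon O'\to O$ and 2-cells $\alpha\colon A'\Rightarrow A$, $\beta\colon B\Rightarrow B'$. Relative monad: a relative monad $(X,I,S)$ in $\mathcal{K}$ consists of objects $X_0,X$, 1-cells $I,S\colon X_0\to X$, an operator $(-)^\dagger=(-)^\dagger_S\colon[I,S]\to[S,S]$ (extension) and a 2-cell $s\colon I\Rightarrow S$ (unit) such that for all 1-cells $A,B,C\colon O\to X_0$ and 2-cells $k\colon IA\Rightarrow SB$, $l\colon IB\Rightarrow SC$: $k^\dagger\cdot sA=k$; $(sA)^\dagger=1_{SA}$; $(l^\dagger\cdot k)^\dagger=l^\dagger\cdot k^\dagger$. Relative adjunction: for a 1-cell $I\colon C_0\to C$, a relative adjunction over $I$, written $F\,{}_I\!\dashv G$, consists of an object $D$, 1-cells $F\colon C_0\to D$, $G\colon D\to C$ and a 2-cell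 $\iota\colon I\Rightarrow GF$ such that for every object $O$ and 1-cells $A\colon O\to C_0$, $B\colon O\to D$ the function $\mathcal{K}[O,D](FA,B)\to\mathcal{K}[O,C](IA,GB)$, $\alpha\mapsto G\alpha\cdot\iota A$, is a bijection. It induces the relative monad $(C,I,GF)$ with unit $\iota$ and extension $f\mapsto G(f^\flat)$, where $f^\flat$ is the unique 2-cell with $G(f^\flat)\cdot\iota A=f$. Relative EM-algebras: for an object $K$, a $K$-indexed relative EM-algebra is a 1-cell $M\colon K\to X$ with an operator $(-)^m\colon[I,M]\to[T,M]$ (for the cospans $(I,M)$ and $(T,M)$ from $X_0;K$ to $X$) such that for all $A,C\colon O\to X_0$, $B\colon O\to K$ and 2-cells $h\colon IA\Rightarrow MB$, $k\colon IC\Rightarrow TA$: $h^m\cdot tA=h$ and $(h^m\cdot k)^m=h^m\cdot k^\dagger$. A morphism $(M,(-)^m)\to(N,(-)^n)$ is a 2-cell $g\colon M\Rightarrow N$ with $gB\cdot h^m=(gB\cdot h)^n$ for all such $h$. These form a category $\mathrm{Mod}^T(K)$ and a 2-functor $\mathrm{Mod}^T(-)\colon\mathcal{K}^{op}\to\mathbf{Cat}$ acting by precomposition ($P\colon K'\to K$ sends $(M,(-)^m)$ to $MP$ with operator $h\mapsto h^m_{A,PB}$). *)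

From Corelib Require Import ssreflect ssrfun ssrbool.
From Stdlib Require Import ProofIrrelevance.

Set Implicit Arguments.
Unset Strict Implicit.
Unset Printing Implicit Defensive.

(* Strict 2-categories.  2-cells are "single-sorted": a 2-cell of the   *)
(* hom-category K[x,y] is an element of [C2 x y] carrying its boundary  *)
(* [src2], [tgt2] (so that the strict associativity of 1-cells, which  *)
(* only holds propositionally, causes no dependent-type problems).      *)
(*   vcomp a b   = a . b  (vertical composite, b first)                 *)
Record Data := {
  Ob : Type;
  H1 : Ob -> Ob -> Type;
  C2 : Ob -> Ob -> Type;
  src2 : forall x y, C2 x y -> H1 x y;
  tgt2 : forall x y, C2 x y -> H1 x y;
  id1 : forall x, H1 x x;
  comp1 : forall x y z, H1 y z -> H1 x y -> H1 x z;
  id2 : forall x y, H1 x y -> C2 x y;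
  vcomp : forall x y, C2 x y -> C2 x y -> C2 x y;
  whl : forall x y z, H1 y z -> C2 x y -> C2 x z;
  whr : forall x y z, C2 y z -> H1 x y -> C2 x z
}.
Arguments id1 {d} x.
Arguments H1 : clear implicits.
Arguments C2 : clear implicits.

Definition cell (K : Data) (x y : Ob K) (a : C2 K x y) (F G : H1 K x y) : Prop :=
  src2 a = F /\ tgt2 a = G.

Record is_twocat (K : Data) : Prop := {
  comp1A : forall x y z w (F : H1 K z w) (G : H1 K y z) (H : H1 K x y),
      comp1 F (comp1 G H) = comp1 (comp1 F G) H;
  comp1_idl : forall x y (F : H1 K x y), comp1 (id1 y) F = F;
  comp1_idr : forall x y (F : H1 K x y), comp1 F (id1 x) = F;
  id2_cell : forall x y (F : H1 K x y), cell (id2 F) F F;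
  vcomp_cell : forall x y (a b : C2 K x y),
      src2 a = tgt2 b -> cell (vcomp a b) (src2 b) (tgt2 a);
  whl_cell : forall x y z (F : H1 K y z) (a : C2 K x y),
      cell (whl F a) (comp1 F (src2 a)) (comp1 F (tgt2 a));
  whr_cell : forall x y z (a : C2 K y z) (P : H1 K x y),
      cell (whr a P) (comp1 (src2 a) P) (comp1 (tgt2 a) P);
  vcompA : forall x y (a b c : C2 K x y), src2 a = tgt2 b -> src2 b = tgt2 c ->
      vcomp a (vcomp b c) = vcomp (vcomp a b) c;
  vcomp_idl : forall x y (a : C2 K x y), vcomp (id2 (tgt2 a)) a = a;
  vcomp_idr : forall x y (a : C2 K x y), vcomp a (id2 (src2 a)) = a;
  whl_vcomp : forall x y z (F : H1 K y z) (a b : C2 K x y), src2 a = tgt2 b ->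
      whl F (vcomp a b) = vcomp (whl F a) (whl F b);
  whl_id2 : forall x y z (F : H1 K y z) (G : H1 K x y),
      whl F (id2 G) = id2 (comp1 F G);
  whr_vcomp : forall x y z (a b : C2 K y z) (P : H1 K x y), src2 a = tgt2 b ->
      whr (vcomp a b) P = vcomp (whr a P) (whr b P);
  whr_id2 : forall x y z (G : H1 K y z) (P : H1 K x y),
      whr (id2 G) P = id2 (comp1 G P);
  whl_comp : forall x y z w (F : H1 K z w) (G : H1 K y z) (a : C2 K x y),
      whl (comp1 F G) a = whl F (whl G a);
  whl_id1 : forall x y (a : C2 K x y), whl (id1 y) a = a;
  whr_comp : forall x y z w (a : C2 K z w) (P : H1 K y z) (Q : H1 K x y),
      whr (whr a P) Q = whr a (comp1 P Q);
  whr_id1 : forall x y (a : C2 K x y), whr a (id1 x) = a;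
  whl_whr : forall x y z w (F : H1 K z w) (a : C2 K y z) (P : H1 K x y),
      whr (whl F a) P = whl F (whr a P);
  interchange : forall x y z (a : C2 K y z) (b : C2 K x y),
      vcomp (whr a (tgt2 b)) (whl (src2 a) b) = vcomp (whl (tgt2 a) b) (whr a (src2 b))
}.

Record TwoCat := { tc :> Data; tc_ax : is_twocat tc }.

(* Operators [F,G] -> [F',G'].  For a cospan F : X -> Z, G : Y -> Z and *)
(* a span A : O -> X, B : O -> Y, the component (-)^#_{A,B} is a       *)
(* function on the 2-cells h : FA => GB (the boundary proof [e] is an   *)
(* argument, so values are only specified on well-typed inputs).       *)
Definition optype (K : Data) (X Y Z : Ob K) (F : H1 K X Z) (G : H1 K Y Z) (Z' : Ob K) :=
  forall (O : Ob K) (A : H1 K O X) (B : H1 K O Y) (h : C2 K O Z),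
    cell h (comp1 F A) (comp1 G B) -> C2 K O Z'.

Record is_operator (K : Data) (X Y Z Z' : Ob K) (F : H1 K X Z) (G : H1 K Y Z)
    (F' : H1 K X Z') (G' : H1 K Y Z') (op : optype F G Z') : Prop := {
  op_cell : forall O (A : H1 K O X) (B : H1 K O Y) h (e : cell h (comp1 F A) (comp1 G B)),
      cell (op O A B h e) (comp1 F' A) (comp1 G' B);
  op_whr : forall O O' (P : H1 K O' O) (A : H1 K O X) (B : H1 K O Y) h e e',
      op O' (comp1 A P) (comp1 B P) (whr h P) e' = whr (op O A B h e) P;
  op_natl : forall O (A A' : H1 K O X) (B : H1 K O Y) (a : C2 K O X) h,
      cell a A' A -> forall e e',
      op O A' B (vcomp h (whl F a)) e' = vcomp (op O A B h e) (whl F' a);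
  op_natr : forall O (A : H1 K O X) (B B' : H1 K O Y) (b : C2 K O Y) h,
      cell b B B' -> forall e e',
      op O A B' (vcomp (whl G b) h) e' = vcomp (whl G' b) (op O A B h e)
}.

Record is_relmonad (K : Data) (X0 X : Ob K) (I S : H1 K X0 X)
    (ext : optype I S X) (s : C2 K X0 X) : Prop := {
  rm_unit_cell : cell s I S;
  rm_op : is_operator S S ext;
  rm_law1 : forall O (A B : H1 K O X0) k (e : cell k (comp1 I A) (comp1 S B)),
      vcomp (ext O A B k e) (whr s A) = k;
  rm_law2 : forall O (A : H1 K O X0) e, ext O A A (whr s A) e = id2 (comp1 S A);
  rm_law3 : forall O (A B C : H1 K O X0) k l
      (ek : cell k (comp1 I A) (comp1 S B)) (el : cell l (comp1 I B) (comp1 S C)) e,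
      ext O A C (vcomp (ext O B C l el) k) e = vcomp (ext O B C l el) (ext O A B k ek)
}.

Arguments is_relmonad {K X0 X} I S ext s.

Lemma opE (K : Data) (X Y Z Z' : Ob K) (F : H1 K X Z) (G : H1 K Y Z)
    (op : optype F G Z') O (A A' : H1 K O X) (B B' : H1 K O Y) h h' e e' :
  A = A' -> B = B' -> h = h' -> op O A B h e = op O A' B' h' e'.
Proof. move=> eA eB eh; subst; f_equal; apply: proof_irrelevance. Qed.

Lemma cell_eq (K : Data) (x y : Ob K) (a : C2 K x y) (F G F' G' : H1 K x y) :
  cell a F G -> F = F' -> G = G' -> cell a F' G'.
Proof. by move=> ? <- <-. Qed.

Section CellLemmas.
Variables (K : Data) (HK : is_twocat K).

Lemma cellW x y z (a : C2 K y z) F G (P : H1 K x y) :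
  cell a F G -> cell (whr a P) (comp1 F P) (comp1 G P).
Proof. by case=> <- <-; apply: whr_cell. Qed.

Lemma cellL x y z (a : C2 K x y) F G (H : H1 K y z) :
  cell a F G -> cell (whl H a) (comp1 H F) (comp1 H G).
Proof. by case=> <- <-; apply: whl_cell. Qed.

Lemma cellV x y (a b : C2 K x y) F G H :
  cell a G H -> cell b F G -> cell (vcomp a b) F H.
Proof.
case=> sa ta [sb tb]; rewrite -sb -ta; apply: vcomp_cell => //.
by rewrite sa tb.
Qed.
End CellLemmas.

Unset Implicit Arguments.
Section ModT.
Variables (K : Data) (HK : is_twocat K).
Variables (X0 X : Ob K) (I T : H1 K X0 X) (ext : optype I T X) (t : C2 K X0 X).

Record is_alg (Kc : Ob K) (M : H1 K Kc X) (m : optype I M X) : Prop := {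
  alg_op : is_operator T M m;
  alg_unit : forall O (A : H1 K O X0) (B : H1 K O Kc) h e,
      vcomp (m O A B h e) (whr t A) = h;
  alg_ext : forall O (A C : H1 K O X0) (B : H1 K O Kc) h k
      (eh : cell h (comp1 I A) (comp1 M B)) (ek : cell k (comp1 I C) (comp1 T A)) e,
      m O C B (vcomp (m O A B h eh) k) e = vcomp (m O A B h eh) (ext O C A k ek)
}.

Arguments is_alg [Kc] M m.
Arguments alg_op [Kc M m].
Arguments alg_unit [Kc M m].
Arguments alg_ext [Kc M m].

Record ModOb (Kc : Ob K) := MkModOb {
  mcar : H1 K Kc X; mop : optype I mcar X; mok : is_alg mcar mop }.
Arguments MkModOb [Kc] mcar mop mok.
Arguments mcar [Kc] m.
Arguments mop [Kc] m.
Arguments mok [Kc] m.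

Definition is_mor (Kc : Ob K) (M N : ModOb Kc) (g : C2 K Kc X) : Prop :=
  cell g (mcar M) (mcar N) /\
  forall O (A : H1 K O X0) (B : H1 K O Kc) h e e',
    vcomp (whr g B) (mop M O A B h e) = mop N O A B (vcomp (whr g B) h) e'.

Record ModAr (Kc : Ob K) := MkModAr {
  mdom : ModOb Kc; mcod : ModOb Kc; mcell : C2 K Kc X; mhom : is_mor Kc mdom mcod mcell }.
Arguments MkModAr [Kc] mdom mcod mcell mhom.
Arguments mdom [Kc] m.
Arguments mcod [Kc] m.
Arguments mcell [Kc] m.
Arguments mhom [Kc] m.
Arguments is_mor [Kc] M N g.

Lemma is_mor_id Kc (M : ModOb Kc) : is_mor M M (id2 (mcar M)).
Proof.
split; first exact: id2_cell.
move=> O A B h e e'.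
have [_ tm] := op_cell (alg_op (mok M)) e.
transitivity (mop M O A B h e).
  by rewrite (whr_id2 HK) -tm (vcomp_idl HK).
apply: opE => //; case: e {e' tm} => _ th.
by rewrite (whr_id2 HK) -th (vcomp_idl HK).
Qed.

Lemma is_mor_comp Kc (g f : ModAr Kc) :
  mdom g = mcod f -> is_mor (mdom f) (mcod g) (vcomp (mcell g) (mcell f)).
Proof.
case: g f => L N g [cg hg] [M L' f [cf hf]] /= E; subst L'.
split; first exact: cellV cg cf.
move=> O A B h e e'.
have sg : src2 g = tgt2 f by case: cg => -> _; case: cf => _ ->.
have cfB := cellW HK B cf; have cgB := cellW HK B cg.
have e1 : cell (vcomp (whr f B) h) (comp1 I A) (comp1 (mcar L) B).
  exact: cellV cfB e.
have e2 : cell (vcomp (whr g B) (vcomp (whr f B) h)) (comp1 I A) (comp1 (mcar N) B).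
  exact: cellV cgB e1.
have [_ tm] := op_cell (alg_op (mok M)) e.
have s1 : src2 (whr g B) = tgt2 (whr f B) by case: cgB => -> _; case: cfB => _ ->.
have s2 : src2 (whr f B) = tgt2 h by case: cfB => -> _; case: (e) => _ ->.
transitivity (mop N O A B (vcomp (whr g B) (vcomp (whr f B) h)) e2).
  have s3 : src2 (whr f B) = tgt2 (mop M O A B h e) by case: cfB => -> _; rewrite tm.
  rewrite (whr_vcomp HK B sg) -(vcompA HK s1 s3).
  by rewrite (hf _ _ _ _ _ e1) (hg _ _ _ _ _ e2).
by apply: opE => //; rewrite (whr_vcomp HK B sg) (vcompA HK s1 s2).
Qed.

Definition mid Kc (M : ModOb Kc) : ModAr Kc := MkModAr M M _ (is_mor_id Kc M).
Definition mcomp Kc (g f : ModAr Kc) (E : mdom g = mcod f) : ModAr Kc :=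
  MkModAr _ _ _ (is_mor_comp Kc g f E).

Definition res_op Kc K' (P : H1 K K' Kc) (M : H1 K Kc X) (m : optype I M X) :
  optype I (comp1 M P) X :=
  fun O A B h e => m O A (comp1 P B) h (cell_eq e erefl (esym (comp1A HK M P B))).

Lemma res_alg Kc K' (P : H1 K K' Kc) (M : ModOb Kc) :
  is_alg (comp1 (mcar M) P) (res_op Kc K' P (mcar M) (mop M)).
Proof.
case: M => M m [[oc ow ol or] au ae]; rewrite /res_op /=.
split; [split|..].
- move=> O A B h e; apply: cell_eq (oc _ _ _ _ _) _ _ => //; exact: comp1A.
- move=> O O' Q A B h e e'.
  have e2 : cell (whr h Q) (comp1 I (comp1 A Q)) (comp1 M (comp1 (comp1 P B) Q)).
    apply: cell_eq (cellW HK Q (cell_eq e erefl (esym (comp1A HK M P B)))) _ _;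
    by rewrite !(comp1A HK).
  by rewrite -(ow _ _ _ _ _ _ _ e2); apply: opE => //; rewrite !(comp1A HK).
- move=> O A A' B a h ca e e'; exact: (ol _ _ _ _ _ _ ca).
- move=> O A B B' b h cb e e'.
  have cb' : cell (whl P b) (comp1 P B) (comp1 P B') by apply: cellL.
  have e2 : cell (vcomp (whl M (whl P b)) h) (comp1 I A) (comp1 M (comp1 P B')).
    exact: cellV (cellL HK M cb') (cell_eq e erefl (esym (comp1A HK M P B))).
  transitivity (m O A (comp1 P B') (vcomp (whl M (whl P b)) h) e2).
    by apply: opE => //; rewrite (whl_comp HK).
  by rewrite (whl_comp HK M P b) (or _ _ _ _ _ _ cb' (cell_eq e erefl (esym (comp1A HK M P B))) e2).
- by move=> O A B h e; apply: au.
- move=> O A C B h k eh ek e; exact: (ae _ _ _ _ _ _ _ ek).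
Qed.

Definition mres Kc K' (P : H1 K K' Kc) (M : ModOb Kc) : ModOb K' :=
  MkModOb _ _ (res_alg Kc K' P M).

Lemma res_mor Kc K' (P : H1 K K' Kc) (f : ModAr Kc) :
  is_mor (mres Kc K' P (mdom f)) (mres Kc K' P (mcod f)) (whr (mcell f) P).
Proof.
case: f => M N g [cg hg]; split; first exact: cellW.
move=> O A B h e e' /=; rewrite /res_op.
have e1 := cell_eq e erefl (esym (comp1A HK (mcar M) P B)).
have e2 : cell (vcomp (whr g (comp1 P B)) h) (comp1 I A) (comp1 (mcar N) (comp1 P B)).
  exact: cellV (cellW HK _ cg) e1.
transitivity (mop N O A (comp1 P B) (vcomp (whr g (comp1 P B)) h) e2).
  by rewrite (whr_comp HK) (hg _ _ _ _ _ e2).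
by apply: opE => //; rewrite (whr_comp HK).
Qed.

Definition mresAr Kc K' (P : H1 K K' Kc) (f : ModAr Kc) : ModAr K' :=
  MkModAr _ _ _ (res_mor Kc K' P f).

Lemma res2_mor Kc K' (a : C2 K K' Kc) (M : ModOb Kc) :
  is_mor (mres Kc K' (src2 a) M) (mres Kc K' (tgt2 a) M) (whl (mcar M) a).
Proof.
case: M => M m [[oc ow ol or] au ae]; split; first exact: whl_cell.
move=> O A B h e e' /=; rewrite /res_op.
have cb : cell (whr a B) (comp1 (src2 a) B) (comp1 (tgt2 a) B) by exact: whr_cell.
have e2 : cell (vcomp (whl M (whr a B)) h) (comp1 I A) (comp1 M (comp1 (tgt2 a) B)).
  exact: cellV (cellL HK M cb) (cell_eq e erefl (esym (comp1A HK M (src2 a) B))).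
transitivity (m O A (comp1 (tgt2 a) B) (vcomp (whl M (whr a B)) h) e2).
  by rewrite (whl_whr HK) (or _ _ _ _ _ _ cb (cell_eq e erefl (esym (comp1A HK M (src2 a) B))) e2).
by apply: opE => //; rewrite (whl_whr HK).
Qed.

Definition mres2 Kc K' (a : C2 K K' Kc) (M : ModOb Kc) : ModAr K' :=
  MkModAr _ _ _ (res2_mor Kc K' a M).

End ModT.
Arguments mcar {K X0 X I T ext t Kc} m.
Arguments mop {K X0 X I T ext t Kc} m.
Arguments mok {K X0 X I T ext t Kc} m.
Arguments mdom {K X0 X I T ext t Kc} m.
Arguments mcod {K X0 X I T ext t Kc} m.
Arguments mcell {K X0 X I T ext t Kc} m.
Arguments mhom {K X0 X I T ext t Kc} m.
Arguments is_alg {K X0 X I T} ext t {Kc} M m.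
Arguments is_mor {K X0 X I T ext t Kc} M N g.

(* An object is a (strict) 2-functor O : K^op -> Cat, given by, for each *)
(* object k, a category O(k) (objects [pOb O k], arrows [pAr O k] with   *)
(* domain/codomain, identities, composition of composable arrows), for   *)
(* each 1-cell P : k' -> k a functor P^* = (pobmap P, parmap P) :        *)
(* O(k) -> O(k'), and for each 2-cell a : P => P' a natural             *)
(* transformation a^* : P^* => P'^* with components [p2 O a x].         *)
Record PSh (K : Data) := MkPSh {
  pOb : Ob K -> Type;
  pAr : Ob K -> Type;
  pdom : forall k, pAr k -> pOb k;
  pcod : forall k, pAr k -> pOb k;
  pid : forall k, pOb k -> pAr k;
  pcomp : forall k (g f : pAr k), pdom k g = pcod k f -> pAr k;
  pobmap : forall k k', H1 K k' k -> pOb k -> pOb k';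
  parmap : forall k k', H1 K k' k -> pAr k -> pAr k';
  p2 : forall k k', C2 K k' k -> pOb k -> pAr k'
}.
Arguments pOb {K} p k.
Arguments pAr {K} p k.
Arguments pdom {K} p {k} f.
Arguments pcod {K} p {k} f.
Arguments pid {K} p {k} x.
Arguments pcomp {K} p {k} g f e.
Arguments pobmap {K} p {k k'} P x.
Arguments parmap {K} p {k k'} P f.
Arguments p2 {K} p {k k'} a x.

Record is_2functor (K : Data) (O : PSh K) : Prop := {
  c_id_dom : forall k (x : pOb O k), pdom O (pid O x) = x;
  c_id_cod : forall k (x : pOb O k), pcod O (pid O x) = x;
  c_comp_dom : forall k (g f : pAr O k) e, pdom O (pcomp O g f e) = pdom O f;
  c_comp_cod : forall k (g f : pAr O k) e, pcod O (pcomp O g f e) = pcod O g;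
  c_compA : forall k (h g f : pAr O k) e1 e2 e3 e4,
      pcomp O h (pcomp O g f e1) e2 = pcomp O (pcomp O h g e3) f e4;
  c_idl : forall k (f : pAr O k) e, pcomp O (pid O (pcod O f)) f e = f;
  c_idr : forall k (f : pAr O k) e, pcomp O f (pid O (pdom O f)) e = f;
  m_dom : forall k k' (P : H1 K k' k) (f : pAr O k),
      pdom O (parmap O P f) = pobmap O P (pdom O f);
  m_cod : forall k k' (P : H1 K k' k) (f : pAr O k),
      pcod O (parmap O P f) = pobmap O P (pcod O f);
  m_id : forall k k' (P : H1 K k' k) (x : pOb O k),
      parmap O P (pid O x) = pid O (pobmap O P x);
  m_comp : forall k k' (P : H1 K k' k) (g f : pAr O k) e e',
      parmap O P (pcomp O g f e) = pcomp O (parmap O P g) (parmap O P f) e';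
  s_ob_id : forall k (x : pOb O k), pobmap O (id1 k) x = x;
  s_ar_id : forall k (f : pAr O k), parmap O (id1 k) f = f;
  s_ob_comp : forall k k' k'' (P : H1 K k' k) (Q : H1 K k'' k') (x : pOb O k),
      pobmap O (comp1 P Q) x = pobmap O Q (pobmap O P x);
  s_ar_comp : forall k k' k'' (P : H1 K k' k) (Q : H1 K k'' k') (f : pAr O k),
      parmap O (comp1 P Q) f = parmap O Q (parmap O P f);
  t_dom : forall k k' (a : C2 K k' k) (x : pOb O k), pdom O (p2 O a x) = pobmap O (src2 a) x;
  t_cod : forall k k' (a : C2 K k' k) (x : pOb O k), pcod O (p2 O a x) = pobmap O (tgt2 a) x;
  t_nat : forall k k' (a : C2 K k' k) (f : pAr O k) e e',
      pcomp O (p2 O a (pcod O f)) (parmap O (src2 a) f) e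
      = pcomp O (parmap O (tgt2 a) f) (p2 O a (pdom O f)) e';
  t_id2 : forall k k' (P : H1 K k' k) (x : pOb O k), p2 O (id2 P) x = pid O (pobmap O P x);
  t_vcomp : forall k k' (a b : C2 K k' k) (x : pOb O k), src2 a = tgt2 b -> forall e,
      p2 O (vcomp a b) x = pcomp O (p2 O a x) (p2 O b x) e;
  t_whr : forall k k' k'' (a : C2 K k' k) (Q : H1 K k'' k') (x : pOb O k),
      p2 O (whr a Q) x = parmap O Q (p2 O a x);
  t_whl : forall k0 k k' (R : H1 K k k0) (a : C2 K k' k) (x : pOb O k0),
      p2 O (whl R a) x = p2 O a (pobmap O R x)
}.

Arguments is_2functor {K} O.

Record PTrans (K : Data) (O O' : PSh K) := MkPTrans {
  tob : forall k, pOb O k -> pOb O' k;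
  tar : forall k, pAr O k -> pAr O' k }.
Arguments PTrans {K} O O'.
Arguments MkPTrans {K O O'} tob tar.
Arguments tob {K O O'} p {k} x.
Arguments tar {K O O'} p {k} f.

Record is_2nat (K : Data) (O O' : PSh K) (A : PTrans O O') : Prop := {
  n_dom : forall k (f : pAr O k), pdom O' (tar A f) = tob A (pdom O f);
  n_cod : forall k (f : pAr O k), pcod O' (tar A f) = tob A (pcod O f);
  n_id : forall k (x : pOb O k), tar A (pid O x) = pid O' (tob A x);
  n_comp : forall k (g f : pAr O k) e e',
      tar A (pcomp O g f e) = pcomp O' (tar A g) (tar A f) e';
  n_ob : forall k k' (P : H1 K k' k) (x : pOb O k),
      tob A (pobmap O P x) = pobmap O' P (tob A x);
  n_ar : forall k k' (P : H1 K k' k) (f : pAr O k),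
      tar A (parmap O P f) = parmap O' P (tar A f);
  n_2 : forall k k' (a : C2 K k' k) (x : pOb O k), tar A (p2 O a x) = p2 O' a (tob A x)
}.

Arguments is_2nat {K O O'} A.

Definition tcomp (K : Data) (O O' O'' : PSh K) (G : PTrans O' O'') (A : PTrans O O') :
  PTrans O O'' := MkPTrans (fun k x => tob G (tob A x)) (fun k f => tar G (tar A f)).
Arguments tcomp {K O O' O''} G A.

Definition PMod (K : Data) (O O' : PSh K) := forall k, pOb O k -> pAr O' k.

Arguments PMod {K} O O'.

Definition is_modif (K : Data) (O O' : PSh K) (A B : PTrans O O') (mu : PMod O O') : Prop :=
  (forall k (x : pOb O k), pdom O' (mu k x) = tob A x /\ pcod O' (mu k x) = tob B x) /\
  (forall k (f : pAr O k) e e',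
      pcomp O' (tar B f) (mu k (pdom O f)) e = pcomp O' (mu k (pcod O f)) (tar A f) e') /\
  (forall k k' (P : H1 K k' k) (x : pOb O k), mu k' (pobmap O P x) = parmap O' P (mu k x)).
Arguments is_modif {K O O'} A B mu.

Definition RepP (K : Data) (Y : Ob K) : PSh K :=
  MkPSh K (fun k => H1 K k Y) (fun k => C2 K k Y)
    (fun k a => src2 a) (fun k a => tgt2 a) (fun k F => id2 F)
    (fun k g f _ => vcomp g f)
    (fun k k' P M => comp1 M P) (fun k k' P a => whr a P) (fun k k' a M => whl M a).

Definition ModP (K : Data) (HK : is_twocat K) (X0 X : Ob K) (I T : H1 K X0 X)
    (ext : optype I T X) (t : C2 K X0 X) : PSh K :=
  MkPSh K (ModOb K X0 X I T ext t) (ModAr K X0 X I T ext t)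
    (fun k g => mdom g) (fun k g => mcod g)
    (mid K HK X0 X I T ext t) (mcomp K HK X0 X I T ext t)
    (fun k k' P M => mres K HK X0 X I T ext t k k' P M)
    (fun k k' P f => mresAr K HK X0 X I T ext t k k' P f)
    (fun k k' a M => mres2 K HK X0 X I T ext t k k' a M).

Definition postcomp (K : Data) (X0 X : Ob K) (S : H1 K X0 X) : PTrans (RepP K X0) (RepP K X) :=
  @MkPTrans K (RepP K X0) (RepP K X)
    (fun k (M : H1 K k X0) => comp1 S M) (fun k (a : C2 K k X0) => whl S a).

Definition forgetU (K : Data) (HK : is_twocat K) (X0 X : Ob K) (I T : H1 K X0 X)
    (ext : optype I T X) (t : C2 K X0 X) : PTrans (ModP K HK X0 X I T ext t) (RepP K X) :=
  @MkPTrans K (ModP K HK X0 X I T ext t) (RepP K X)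
    (fun k (M : ModOb K X0 X I T ext t k) => mcar M)
    (fun k (g : ModAr K X0 X I T ext t k) => mcell g).

Definition unit_mod (K : Data) (X0 X : Ob K) (t : C2 K X0 X) : PMod (RepP K X0) (RepP K X) :=
  fun k (M : H1 K k X0) => whr t M.

Definition bij_on (A B : Type) (P : A -> Prop) (Q : B -> Prop) (f : A -> B) : Prop :=
  (forall x, P x -> Q (f x)) /\
  (forall x y, P x -> P y -> f x = f y -> x = y) /\
  (forall y, Q y -> exists x, P x /\ f x = y).
Arguments bij_on {A B} P Q f.

(* Relative adjunction F _J-| G in K^ over J : C0 -> K(-,Y), with unit iota,
   where the 1-cells are 2-natural transformations and the 2-cells
   modifications: for every object O of K^ (a 2-functor K^op -> Cat) and
   1-cells A : O -> C0, B : O -> D, the map alpha |-> G alpha . iota A from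
   modifications FA => B to modifications JA => GB is a bijection.
   (Vertical composition in K(-,Y) is componentwise [vcomp], which is the
   composition [pcomp] of [RepP K Y].) *)
Definition rel_adj_hat (K : Data) (Y : Ob K) (C0 D : PSh K)
    (J : PTrans C0 (RepP K Y)) (F : PTrans C0 D) (G : PTrans D (RepP K Y))
    (iota : PMod C0 (RepP K Y)) : Prop :=
  is_2functor C0 /\ is_2functor D /\ is_2functor (RepP K Y) /\
  is_2nat J /\ is_2nat F /\ is_2nat G /\ is_modif J (tcomp G F) iota /\
  forall (O : PSh K), is_2functor O ->
  forall (A : PTrans O C0) (B : PTrans O D), is_2nat A -> is_2nat B ->
    bij_on (is_modif (tcomp F A) B) (is_modif (tcomp J A) (tcomp G B))
      (fun (alpha : PMod O D) k x => vcomp (tar G (alpha k x)) (iota k (tob A x))).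
Arguments rel_adj_hat {K Y C0 D} J F G iota.

From Pilot Require Import Defs.
From Corelib Require Import ssreflect ssrfun ssrbool.
From Stdlib Require Import ProofIrrelevance FunctionalExtensionality.

(* The monad laws of (X, I, T) say precisely that T with its extension operator
   is an X0-indexed relative EM-algebra, the generic algebra.  The free algebra
   FM = (TM, (-)^dagger) is its restriction along M : k -> X0, so F is the
   Yoneda transformation K(-,X0) -> Mod^T(-) of the generic algebra, and it is
   2-natural because Mod^T(-) is a 2-functor.  The core of the argument is
   componentwise: for an algebra (N, n), every cell f : IM => N has a transpose
   f^n = f^n_{M,1}, which is an algebra morphism FM -> N with f^n . tM = f (the
   algebra unit law), while every morphism g : FM -> N equals (g . tM)^n because
   (tM)^dagger = 1.  Transposition commutes with whiskering and restriction and
   is natural, so it lifts to a bijection between modifications FA => B and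
   I_* A => U B, which is the relative adjunction in K^ = [K^op, Cat]. *)

Section TwoCategoryFacts.
Context {K : Data} (HK : is_twocat K).

Lemma cell_composable {x y} {a b : C2 K x y} {F G H} :
  cell a G H -> cell b F G -> src2 a = tgt2 b.
Proof. by case=> -> _ [_ ->]. Qed.

Lemma cell_idr {x y} {a : C2 K x y} {F G} : cell a F G -> cell a F (comp1 G (id1 x)).
Proof. by move=> ca; apply: cell_eq ca _ _; rewrite ?(comp1_idr HK). Qed.

Lemma rep_is_2functor (Y : Ob K) : is_2functor (RepP K Y).
Proof.
split => /=.
- by move=> k x; case: (id2_cell HK x).
- by move=> k x; case: (id2_cell HK x).
- by move=> k g f e; case: (vcomp_cell HK e).
- by move=> k g f e; case: (vcomp_cell HK e).
- by move=> k h g f e1 e2 e3 e4; apply: (vcompA HK).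
- by move=> k f e; apply: (vcomp_idl HK).
- by move=> k f e; apply: (vcomp_idr HK).
- by move=> k k' P f; case: (whr_cell HK f P).
- by move=> k k' P f; case: (whr_cell HK f P).
- by move=> k k' P x; apply: (whr_id2 HK).
- by move=> k k' P g f e e'; apply: (whr_vcomp HK).
- by move=> k x; apply: (comp1_idr HK).
- by move=> k f; apply: (whr_id1 HK).
- by move=> k k' k'' P Q x; rewrite (comp1A HK).
- by move=> k k' k'' P Q f; rewrite (whr_comp HK).
- by move=> k k' a x; case: (whl_cell HK x a).
- by move=> k k' a x; case: (whl_cell HK x a).
- by move=> k k' a f e e'; symmetry; exact: (Defs.interchange HK f a).
- by move=> k k' P x; apply: (whl_id2 HK).
- by move=> k k' a b x E e; apply: (whl_vcomp HK).
- by move=> k k' k'' a Q x; rewrite (whl_whr HK).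
- by move=> k0 k k' R a x; rewrite (whl_comp HK).
Qed.

Lemma postcomp_is_2nat (X0 X : Ob K) (S : H1 K X0 X) : is_2nat (postcomp K X0 X S).
Proof.
split => /=.
- by move=> k f; case: (whl_cell HK S f).
- by move=> k f; case: (whl_cell HK S f).
- by move=> k x; apply: (whl_id2 HK).
- by move=> k g f e e'; apply: (whl_vcomp HK).
- by move=> k k' P x; apply: (comp1A HK).
- by move=> k k' P f; rewrite (whl_whr HK).
- by move=> k k' a x; rewrite (whl_comp HK).
Qed.

Definition yoneda_trans (O : PSh K) {Y : Ob K} (x : pOb O Y) : PTrans (RepP K Y) O :=
  @MkPTrans K (RepP K Y) O (fun k M => pobmap O M x) (fun k a => p2 O a x).

Lemma yoneda_is_2nat (O : PSh K) {Y : Ob K} (x : pOb O Y) :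
  is_2functor O -> is_2nat (yoneda_trans O x).
Proof.
move=> HO; split => /=.
- by move=> k a; apply: (t_dom _ _ HO).
- by move=> k a; apply: (t_cod _ _ HO).
- by move=> k M; apply: (t_id2 _ _ HO).
- by move=> k b a e e'; apply: (t_vcomp _ _ HO).
- by move=> k k' P M; apply: (s_ob_comp _ _ HO).
- by move=> k k' P a; apply: (t_whr _ _ HO).
- by move=> k k' a M; apply: (t_whl _ _ HO).
Qed.

Context {X0 X : Ob K} {F G : H1 K X0 X} {u : C2 K X0 X}.
Hypothesis u_cell : cell u F G.

Lemma whisker_exchange {k} (a : C2 K k X0) :
  vcomp (whl G a) (whr u (src2 a)) = vcomp (whr u (tgt2 a)) (whl F a).
Proof. by case: u_cell (Defs.interchange HK u a) => -> -> ->. Qed.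

(* Precomposing with u M turns a naturality square b . g = g' . G a of cells
   out of GM, GM' into one of cells out of FM, FM'.  This is the naturality of
   the transpose g |-> g . u M. *)
Lemma transpose_natural {k} {a : C2 K k X0} {M M' : H1 K k X0} {N N' : H1 K k X}
    {g g' b : C2 K k X} :
  cell a M M' -> cell g (comp1 G M) N -> cell g' (comp1 G M') N' -> cell b N N' ->
  vcomp b g = vcomp g' (whl G a) ->
  vcomp b (vcomp g (whr u M)) = vcomp (vcomp g' (whr u M')) (whl F a).
Proof.
move=> ca cg cg' cb square.
have cuM := cellW HK M u_cell; have cuM' := cellW HK M' u_cell.
have cGa := cellL HK G ca; have cFa := cellL HK F ca.
have exchange := whisker_exchange a; case: ca exchange => -> -> exchange.
rewrite (vcompA HK (cell_composable cb cg) (cell_composable cg cuM)) square.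
rewrite -(vcompA HK (cell_composable cg' cGa) (cell_composable cGa cuM)) exchange.
by rewrite (vcompA HK (cell_composable cg' cuM') (cell_composable cuM' cFa)).
Qed.

Lemma whisker_is_modif : is_modif (postcomp K X0 X F) (postcomp K X0 X G) (unit_mod K X0 X u).
Proof.
rewrite /unit_mod; split; [|split] => /=.
- by move=> k M; case: u_cell (whr_cell HK u M) => -> ->.
- by move=> k a e e'; exact: whisker_exchange.
- by move=> k k' P M; rewrite (whr_comp HK).
Qed.

End TwoCategoryFacts.

Section AlgebraCategories.
Context {K : Data} (HK : is_twocat K).
Context {X0 X : Ob K} {I T : H1 K X0 X} {ext : optype I T X} {t : C2 K X0 X}.

Notation MO := (ModOb K X0 X I T ext t).
Notation MA := (ModAr K X0 X I T ext t).
Notation mres := (mres K HK X0 X I T ext t).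

Lemma mod_ob_eq {k} (M N : MO k) : mcar M = mcar N ->
  (forall O A B h e e', mop M O A B h e = mop N O A B h e') -> M = N.
Proof.
case: M N => m mo mk [n no nk] /= E; subst n => Eop.
have E : mo = no by do 5 (apply: functional_extensionality_dep => ?); exact: Eop.
by subst no; f_equal; apply: proof_irrelevance.
Qed.

Lemma mod_ar_eq {k} (f g : MA k) :
  mdom f = mdom g -> mcod f = mcod g -> mcell f = mcell g -> f = g.
Proof.
case: f g => d c m h [d' c' m' h'] /= E1 E2 E3; subst.
by f_equal; apply: proof_irrelevance.
Qed.

Lemma mop_congr {k} (M N : MO k) O A A' B B' h h' e e' :
  M = N -> A = A' -> B = B' -> h = h' -> mop M O A B h e = mop N O A' B' h' e'.
Proof. by move=> E; subst; apply: opE. Qed.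

Lemma mor_cell {k} (g : MA k) : cell (mcell g) (mcar (mdom g)) (mcar (mcod g)).
Proof. by case: g => d c m [H ?]. Qed.

Lemma mor_commutes {k} (g : MA k) M N : mdom g = M -> mcod g = N ->
  forall O A B h e e', vcomp (whr (mcell g) B) (mop M O A B h e)
                       = mop N O A B (vcomp (whr (mcell g) B) h) e'.
Proof. by case: g => d c m [? H] /= <- <-; exact: H. Qed.

Lemma mor_composable {k} (g f : MA k) :
  mdom g = mcod f -> src2 (mcell g) = tgt2 (mcell f).
Proof. by case: (mor_cell g) => -> _; case: (mor_cell f) => _ -> ->. Qed.

Lemma mres_id {k} (M : MO k) : mres k k (id1 k) M = M.
Proof.
apply: mod_ob_eq => /=; first exact: (comp1_idr HK).
by move=> O A B h e e'; rewrite /res_op; apply: opE => //; exact: (comp1_idl HK).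
Qed.

Lemma mres_comp {k k' k''} (P : H1 K k' k) (Q : H1 K k'' k') (M : MO k) :
  mres k k'' (comp1 P Q) M = mres k' k'' Q (mres k k' P M).
Proof.
apply: mod_ob_eq => /=; first exact: (comp1A HK).
by move=> O A B h e e'; rewrite /res_op; apply: opE => //; symmetry; exact: (comp1A HK).
Qed.

Lemma mod_is_2functor : is_2functor (ModP K HK X0 X I T ext t).
Proof.
split => //=.
- move=> k h g f e1 e2 e3 e4; apply: mod_ar_eq => //=.
  by apply: (vcompA HK); exact: mor_composable.
- move=> k f e; apply: mod_ar_eq => //=.
  by case: (mor_cell f) => _ <-; apply: (vcomp_idl HK).
- move=> k f e; apply: mod_ar_eq => //=.
  by case: (mor_cell f) => <- _; apply: (vcomp_idr HK).
- by move=> k k' P x; apply: mod_ar_eq => //=; exact: (whr_id2 HK).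
- move=> k k' P g f e e'; apply: mod_ar_eq => //=.
  by apply: (whr_vcomp HK); exact: mor_composable.
- exact: @mres_id.
- by move=> k f; apply: mod_ar_eq => /=; try exact: mres_id; exact: (whr_id1 HK).
- exact: @mres_comp.
- move=> k k' k'' P Q f; apply: mod_ar_eq => /=; try exact: mres_comp.
  by symmetry; exact: (whr_comp HK).
- move=> k k' a f e e'; apply: mod_ar_eq => //=.
  by case: (mor_cell f) => <- <-; symmetry; exact: (Defs.interchange HK (mcell f) a).
- move=> k k' P x; apply: mod_ar_eq => /=; last exact: (whl_id2 HK).
  + by case: (id2_cell HK P) => -> _.
  + by case: (id2_cell HK P) => _ ->.
- move=> k k' a b x E e; apply: mod_ar_eq => /=; last exact: (whl_vcomp HK).
  + by case: (vcomp_cell HK E) => ->.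
  + by case: (vcomp_cell HK E) => _ ->.
- move=> k k' k'' a Q x; apply: mod_ar_eq => /=; last by rewrite (whl_whr HK).
  + by case: (whr_cell HK a Q) => -> _; apply: mres_comp.
  + by case: (whr_cell HK a Q) => _ ->; apply: mres_comp.
- move=> k0 k k' R a x; apply: mod_ar_eq => /=; last by rewrite (whl_comp HK).
  + by case: (whl_cell HK R a) => -> _; apply: mres_comp.
  + by case: (whl_cell HK R a) => _ ->; apply: mres_comp.
Qed.

Lemma forget_is_2nat : is_2nat (forgetU K HK X0 X I T ext t).
Proof. by split => //= k f; case: (mor_cell f). Qed.

Definition lift {k} {M : H1 K k X0} {N : MO k} {f} (cf : cell f (comp1 I M) (mcar N)) : C2 K k X :=
  mop N k M (id1 k) f (cell_idr HK cf).

Lemma lift_mop {k} {M : H1 K k X0} {N : MO k} {f} (cf : cell f (comp1 I M) (mcar N)) e :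
  mop N k M (id1 k) f e = lift cf.
Proof. exact: opE. Qed.

Lemma lift_congr {k} {M M' : H1 K k X0} {N N' : MO k} {f f'}
    (cf : cell f (comp1 I M) (mcar N)) (cf' : cell f' (comp1 I M') (mcar N')) :
  M = M' -> N = N' -> f = f' -> lift cf = lift cf'.
Proof. by move=> EM EN Ef; apply: mop_congr. Qed.

Lemma lift_unit {k} {M : H1 K k X0} {N : MO k} {f} (cf : cell f (comp1 I M) (mcar N)) :
  vcomp (lift cf) (whr t M) = f.
Proof. by case: (mok N) => _ unit _; apply: unit. Qed.

Lemma lift_whr {k} {M : H1 K k X0} {N : MO k} {f} (cf : cell f (comp1 I M) (mcar N))
    {O} (B : H1 K O k) e :
  mop N O (comp1 M B) B (whr f B) e = whr (lift cf) B.
Proof.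
have [opN _ _] := mok N.
have cfB : cell (whr f B) (comp1 I (comp1 M B)) (comp1 (mcar N) (comp1 (id1 k) B)).
  by apply: cell_eq (cellW HK B (cell_idr HK cf)) _ _; rewrite -(comp1A HK).
by rewrite /lift -(op_whr opN (cell_idr HK cf) cfB); apply: opE; rewrite ?(comp1_idl HK).
Qed.

Lemma lift_restrict {k k'} (P : H1 K k' k) {M : H1 K k X0} {N : MO k} {f}
    (cf : cell f (comp1 I M) (mcar N)) (cfP : cell (whr f P) (comp1 I (comp1 M P)) (mcar (mres k k' P N))) :
  lift cfP = whr (lift cf) P.
Proof. by rewrite -(lift_whr cf P cfP) /lift /= /res_op; apply: opE; rewrite ?(comp1_idr HK). Qed.

Lemma lift_natural {k} (b : MA k) {N N' : MO k} (Hd : mdom b = N) (Hc : mcod b = N')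
    {M M' : H1 K k X0} {a : C2 K k X0} (ca : cell a M M') {f f'}
    (cf : cell f (comp1 I M) (mcar N)) (cf' : cell f' (comp1 I M') (mcar N')) :
  vcomp (mcell b) f = vcomp f' (whl I a) ->
  vcomp (mcell b) (lift cf) = vcomp (lift cf') (whl T a).
Proof.
move=> square.
have cb : cell (mcell b) (mcar N) (mcar N') by rewrite -Hd -Hc; exact: mor_cell.
have cbf : cell (vcomp (whr (mcell b) (id1 k)) f) (comp1 I M) (comp1 (mcar N') (id1 k)).
  by rewrite (whr_id1 HK); exact: cell_idr (cellV HK cb cf).
have cf'a : cell (vcomp f' (whl I a)) (comp1 I M) (comp1 (mcar N') (id1 k)).
  exact: cell_idr (cellV HK cf' (cellL HK I ca)).
have [opN' _ _] := mok N'.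
rewrite -(whr_id1 HK (mcell b)) /lift (mor_commutes b _ _ Hd Hc _ _ _ _ _ cbf).
transitivity (mop N' k M (id1 k) (vcomp f' (whl I a)) cf'a).
  by apply: opE; rewrite ?(whr_id1 HK) ?square.
exact: (op_natl opN' ca).
Qed.

End AlgebraCategories.

Section FreeAlgebras.
Context {K : Data} (HK : is_twocat K).
Context {X0 X : Ob K} {I T : H1 K X0 X} {ext : optype I T X} {t : C2 K X0 X}.
Hypothesis Hrm : is_relmonad I T ext t.

Notation MO := (ModOb K X0 X I T ext t).
Notation MA := (ModAr K X0 X I T ext t).
Notation ModT := (ModP K HK X0 X I T ext t).
Notation lift := (lift HK).

Lemma generic_alg : is_alg ext t T ext.
Proof.
split; [exact: rm_op Hrm | exact: rm_law1 Hrm |].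
by move=> O A C B h k eh ek e; apply: (rm_law3 Hrm).
Qed.

Definition genericM : MO X0 := MkModOb K X0 X I T ext t X0 T ext generic_alg.

(* The free algebra FM = (TM, (-)^dagger) is the restriction of the generic
   algebra along M, so F : K(-,X0) -> Mod^T(-) is the Yoneda transformation
   of the generic algebra, and thus 2-natural. *)
Definition freeP : PTrans (RepP K X0) ModT := yoneda_trans ModT genericM.

Definition freeM {k} (M : H1 K k X0) : MO k := tob freeP M.

Lemma free_is_2nat : is_2nat freeP.
Proof. exact: yoneda_is_2nat (mod_is_2functor HK (ext:=ext) (t:=t)). Qed.

Lemma unit_is_modif :
  is_modif (postcomp K X0 X I) (tcomp (forgetU K HK X0 X I T ext t) freeP) (unit_mod K X0 X t).
Proof. exact (whisker_is_modif HK (rm_unit_cell Hrm)). Qed.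

Lemma unit_cell {k} (M : H1 K k X0) : cell (whr t M) (comp1 I M) (comp1 T M).
Proof. exact (cellW HK M (rm_unit_cell Hrm)). Qed.

Lemma free_op_unit {k} (M : H1 K k X0) e :
  mop (freeM M) k M (id1 k) (whr t M) e = id2 (comp1 T M).
Proof.
rewrite -(rm_law2 Hrm (unit_cell M)) /= /res_op.
by apply: opE => //; exact: (comp1_idr HK).
Qed.

(* A morphism g : FM -> N is the transpose of its restriction g . tM along
   the unit: g = g . (tM)^dagger = (g . tM)^n. *)
Lemma free_mor_determined {k} (g : MA k) (M : H1 K k X0) (N : MO k)
    (Hd : mdom g = freeM M) (Hc : mcod g = N)
    (cf : cell (vcomp (mcell g) (whr t M)) (comp1 I M) (mcar N)) :
  mcell g = lift cf.
Proof.
have cg : cell (mcell g) (comp1 T M) (mcar N) by have := mor_cell g; rewrite Hd Hc.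
have cgt : cell (vcomp (whr (mcell g) (id1 k)) (whr t M)) (comp1 I M) (comp1 (mcar N) (id1 k)).
  by rewrite (whr_id1 HK); exact: cell_idr.
have commutes := mor_commutes g _ _ Hd Hc _ _ _ _ (cell_idr HK (unit_cell M)) cgt.
have -> : lift cf = mop N k M (id1 k) _ cgt by apply: mop_congr; rewrite ?(whr_id1 HK).
rewrite -commutes free_op_unit (whr_id1 HK).
by case: cg => <- _; rewrite (vcomp_idr HK).
Qed.

Lemma unit_restrict_cell {k} (g : MA k) (M : H1 K k X0) (N : MO k) :
  mdom g = freeM M -> mcod g = N -> cell (vcomp (mcell g) (whr t M)) (comp1 I M) (mcar N).
Proof. by move=> Hd Hc; have := mor_cell g; rewrite Hd Hc => cg; exact (cellV HK cg (unit_cell M)). Qed.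

Lemma free_mor_ext {k} (g : MA k) (M M' : H1 K k X0) h
    (Hd : mdom g = freeM M) (Hc : mcod g = freeM M') (Eh : vcomp (mcell g) (whr t M) = h)
    (e : cell h (comp1 I M) (comp1 T M')) :
  mcell g = ext k M M' h e.
Proof.
rewrite (free_mor_determined g M (freeM M') Hd Hc (unit_restrict_cell g M _ Hd Hc)) /lift /= /res_op.
by apply: opE; rewrite ?(comp1_idr HK) ?Eh.
Qed.

(* The transpose f^n of f : IM => N is an algebra morphism FM -> N: by
   (f^n) B = (f B)^n and the algebra law, f^n B . h^dagger = (f^n B . h)^n. *)
Lemma lift_is_mor {k} {M : H1 K k X0} {N : MO k} {f} (cf : cell f (comp1 I M) (mcar N)) :
  is_mor (freeM M) N (lift cf).
Proof.
have [opN _ extN] := mok N.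
split; first by apply: cell_eq (op_cell opN (cell_idr HK cf)) _ _; rewrite ?(comp1_idr HK).
move=> O A B h eh e'.
have cfB : cell (whr f B) (comp1 I (comp1 M B)) (comp1 (mcar N) B).
  by apply: cell_eq (cellW HK B cf) _ _; rewrite ?(comp1A HK).
have ch : cell h (comp1 I A) (comp1 T (comp1 M B)).
  by apply: cell_eq eh _ _; rewrite -?(comp1A HK).
have cfBh := cellV HK (op_cell opN cfB) ch.
transitivity (vcomp (mop N O (comp1 M B) B (whr f B) cfB) (ext O A (comp1 M B) h ch)).
  by rewrite (lift_whr HK cf B cfB); congr vcomp; rewrite /= /res_op; apply: opE.
by rewrite -(extN _ _ _ _ _ _ _ ch cfBh); apply: opE; rewrite ?(lift_whr HK cf B cfB).
Qed.

Definition liftAr {k} {M : H1 K k X0} {N : MO k} {f} (cf : cell f (comp1 I M) (mcar N)) : MA k :=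
  MkModAr K X0 X I T ext t k (freeM M) N (lift cf) (lift_is_mor cf).

End FreeAlgebras.

Section Transposition.
Context {K : Data} (HK : is_twocat K).
Context {X0 X : Ob K} {I T : H1 K X0 X} {ext : optype I T X} {t : C2 K X0 X}.
Hypothesis Hrm : is_relmonad I T ext t.

Notation ModT := (ModP K HK X0 X I T ext t).
Notation U := (forgetU K HK X0 X I T ext t).
Notation F := (freeP HK Hrm).

Context {O : PSh K} {A : PTrans O (RepP K X0)} {B : PTrans O ModT}.
Hypotheses (HA : is_2nat A) (HB : is_2nat B).

Definition transpose (alpha : PMod O ModT) : PMod O (RepP K X) :=
  fun k x => vcomp (tar U (alpha k x)) (unit_mod K X0 X t k (tob A x)).

Lemma transpose_is_modif {alpha} : is_modif (tcomp F A) B alpha ->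
  is_modif (tcomp (postcomp K X0 X I) A) (tcomp U B) (transpose alpha).
Proof.
move=> [bd [nat res]]; rewrite /transpose /unit_mod.
have cal k x : cell (mcell (alpha k x)) (comp1 T (tob A x)) (mcar (tob B x)).
  by have := mor_cell (alpha k x); case: (bd k x) => /= -> ->.
split; [|split] => /=.
- by move=> k x; case: (cellV HK (cal k x) (unit_cell HK Hrm (tob A x))).
- move=> k phi e e'.
  have ca : cell (tar A phi) (tob A (pdom O phi)) (tob A (pcod O phi)).
    by split; [exact: (n_dom _ _ _ _ HA) | exact: (n_cod _ _ _ _ HA)].
  have cb : cell (mcell (tar B phi)) (mcar (tob B (pdom O phi))) (mcar (tob B (pcod O phi))).
    by rewrite -(n_dom _ _ _ _ HB) -(n_cod _ _ _ _ HB); exact: mor_cell.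
  apply: (transpose_natural HK (rm_unit_cell Hrm) ca (cal _ _) (cal _ _) cb).
  have e1 : mdom (tar B phi) = mcod (alpha k (pdom O phi)).
    by have /= -> := n_dom _ _ _ _ HB k phi; case: (bd k (pdom O phi)).
  have e2 : mdom (alpha k (pcod O phi)) = mcod (tar (tcomp F A) phi).
    by case: (bd k (pcod O phi)) => /= -> _; case: ca => _ ->.
  exact: (f_equal (@mcell _ _ _ _ _ _ _ _) (nat k phi e1 e2)).
- move=> k k' P x; rewrite (res k k' P x) /= (n_ob _ _ _ _ HA) /=.
  by rewrite (whr_vcomp HK P (cell_composable (cal k x) (unit_cell HK Hrm (tob A x)))) (whr_comp HK).
Qed.

Lemma transpose_inj alpha beta :
  is_modif (tcomp F A) B alpha -> is_modif (tcomp F A) B beta ->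
  transpose alpha = transpose beta -> alpha = beta.
Proof.
move=> Ha Hb E.
apply: functional_extensionality_dep => k; apply: functional_extensionality => x.
have [cta _] := transpose_is_modif Ha; have [ctb _] := transpose_is_modif Hb.
case: Ha Hb => bda _ [bdb _]; case: (bda k x) (bdb k x) => /= da ca [db cb].
apply: mod_ar_eq; [by rewrite da db | by rewrite ca cb |].
rewrite (free_mor_determined HK Hrm _ _ _ da ca (cta k x)).
rewrite (free_mor_determined HK Hrm _ _ _ db cb (ctb k x)).
by apply: (lift_congr HK) => //; exact: (congr1 (fun m => m k x) E).
Qed.

Section Untranspose.
Variable f : PMod O (RepP K X).
Hypothesis Hf : is_modif (tcomp (postcomp K X0 X I) A) (tcomp U B) f.

Let cf k x : cell (f k x) (comp1 I (tob A x)) (mcar (tob B x)) := proj1 Hf k x.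

Definition untranspose : PMod O ModT := fun k x => liftAr HK Hrm (cf k x).

Lemma untranspose_is_modif : is_modif (tcomp F A) B untranspose.
Proof.
have [_ [nat res]] := Hf.
split; [|split] => //.
- move=> k phi e e'.
  have ca : cell (tar A phi) (tob A (pdom O phi)) (tob A (pcod O phi)).
    by split; [exact: (n_dom _ _ _ _ HA) | exact: (n_cod _ _ _ _ HA)].
  apply: mod_ar_eq => /=.
  + by have /= -> := n_dom _ _ _ _ HA k phi.
  + by have /= -> := n_cod _ _ _ _ HB k phi.
  + apply: (lift_natural HK (tar B phi) (n_dom _ _ _ _ HB k phi) (n_cod _ _ _ _ HB k phi) ca).
    have cb : cell (mcell (tar B phi)) (mcar (tob B (pdom O phi))) (mcar (tob B (pcod O phi))).
      by rewrite -(n_dom _ _ _ _ HB) -(n_cod _ _ _ _ HB); exact: mor_cell.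
    exact: (nat k phi (cell_composable cb (cf _ _)) (cell_composable (cf _ _) (cellL HK I ca))).
- move=> k k' P x.
  have cfP : cell (whr (f k x) P) (comp1 I (comp1 (tob A x) P))
                 (mcar (mres K HK X0 X I T ext t k k' P (tob B x))).
    by apply: cell_eq (cellW HK P (cf k x)) _ _; rewrite ?(comp1A HK).
  apply: mod_ar_eq => /=.
  + by have /= -> := n_ob _ _ _ _ HA k k' P x; apply: mres_comp.
  + exact: (n_ob _ _ _ _ HB k k' P x).
  + rewrite -(lift_restrict HK P (cf k x) cfP); apply: (lift_congr HK).
    * exact: (n_ob _ _ _ _ HA k k' P x).
    * exact: (n_ob _ _ _ _ HB k k' P x).
    * exact: (res k k' P x).
Qed.

Lemma transpose_untranspose : transpose untranspose = f.
Proof.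
apply: functional_extensionality_dep => k; apply: functional_extensionality => x.
exact: lift_unit.
Qed.

End Untranspose.

End Transposition.

Theorem free_forget_rel_adj {K : Data} (HK : is_twocat K) {X0 X : Ob K} {I T : H1 K X0 X}
    {ext : optype I T X} {t : C2 K X0 X} (Hrm : is_relmonad I T ext t) :
  rel_adj_hat (postcomp K X0 X I) (freeP HK Hrm) (forgetU K HK X0 X I T ext t) (unit_mod K X0 X t).
Proof.
split; first exact: rep_is_2functor.
split; first exact: mod_is_2functor.
split; first exact: rep_is_2functor.
split; first exact: postcomp_is_2nat.
split; first exact: free_is_2nat.
split; first exact: forget_is_2nat.
split; first exact: unit_is_modif.
move=> O _ A B HA HB; split; [|split].
- by move=> alpha; apply: transpose_is_modif.
- by move=> alpha beta; apply: transpose_inj.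
- move=> f Hf; exists (untranspose HK Hrm _ Hf).
  by split; [exact: untranspose_is_modif | exact: transpose_untranspose].
Qed.

Theorem mainTheorem7 (K : TwoCat) (X0 X : Ob K) (I T : H1 K X0 X)
    (ext : optype I T X) (t : C2 K X0 X) :
  is_relmonad I T ext t ->
  exists F : PTrans (RepP K X0) (ModP K (tc_ax K) X0 X I T ext t),
    (* F sends M : k -> X0 to (TM, h |-> h^dagger) and a 2-cell a to T a *)
    (forall k (M : H1 K k X0),
        mcar (tob F M) = comp1 T M /\
        (forall O (A : H1 K O X0) (B : H1 K O k) h e e',
            mop (tob F M) O A B h e = ext O A (comp1 M B) h e')) /\
    (forall k (a : C2 K k X0), mcell (tar F a) = whl T a) /\
    (* F _{I_*}-| U in K^ = [K^op, Cat], with unit the modification (tM)_M *)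
    rel_adj_hat (postcomp K X0 X I) F (forgetU K (tc_ax K) X0 X I T ext t)
      (unit_mod K X0 X t) /\
    (* in particular: Mod^T(k)(FM, (N,n)) ~ K[k,X](IM, N), g |-> g . tM, with inverse f |-> f^n *)
    (forall k (M : H1 K k X0) (N : ModOb K X0 X I T ext t k),
        (forall g : ModAr K X0 X I T ext t k, mdom g = tob F M -> mcod g = N ->
            cell (vcomp (mcell g) (whr t M)) (comp1 I M) (mcar N) /\
            (forall e, mop N k M (id1 k) (vcomp (mcell g) (whr t M)) e = mcell g)) /\
        (forall f : C2 K k X, cell f (comp1 I M) (mcar N) -> forall e,
            (exists g : ModAr K X0 X I T ext t k,
                mdom g = tob F M /\ mcod g = N /\ mcell g = mop N k M (id1 k) f e) /\
            vcomp (mop N k M (id1 k) f e) (whr t M) = f)) /\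
    (* the induced relative monad is (K(-,X), I_*, T_* ) with unit t and extension (-)^dagger *)
    (forall k (M : H1 K k X0),
        tob (tcomp (forgetU K (tc_ax K) X0 X I T ext t) F) M = tob (postcomp K X0 X T) M) /\
    (forall k (a : C2 K k X0),
        tar (tcomp (forgetU K (tc_ax K) X0 X I T ext t) F) a = tar (postcomp K X0 X T) a) /\
    (forall (O : PSh K), is_2functor O ->
     forall (A B : PTrans O (RepP K X0)), is_2nat A -> is_2nat B ->
     forall f : PMod O (RepP K X),
       is_modif (tcomp (postcomp K X0 X I) A) (tcomp (postcomp K X0 X T) B) f ->
     forall alpha : PMod O (ModP K (tc_ax K) X0 X I T ext t),
       is_modif (tcomp F A) (tcomp F B) alpha ->
       (forall k (x : pOb O k),
          vcomp (tar (forgetU K (tc_ax K) X0 X I T ext t) (alpha k x))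
                (unit_mod K X0 X t k (tob A x)) = f k x) ->
       forall k (x : pOb O k) e,
         tar (forgetU K (tc_ax K) X0 X I T ext t) (alpha k x)
         = ext k (tob A x) (tob B x) (f k x) e).

Proof.
move=> Hrm; pose HK := tc_ax K.
exists (freeP HK Hrm).
split; [|split; [|split; [|split; [|split; [|split]]]]].
- by move=> k M; split => // O A B h e e'; rewrite /= /res_op; apply: opE.
- by [].
- exact: free_forget_rel_adj.
- move=> k M N; split.
  + move=> g Hd Hc; have cg := unit_restrict_cell HK Hrm g M N Hd Hc.
    split => // e; rewrite (lift_mop HK cg); symmetry; exact: free_mor_determined.
  + move=> f cf e; rewrite (lift_mop HK cf); split; last exact: lift_unit.
    by exists (liftAr HK Hrm cf).
- by [].
- by [].
- move=> O _ A B _ _ f _ alpha [bd _] Heq k x e.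
  by case: (bd k x) => /= da ca; apply: free_mor_ext da ca (Heq k x) e.
Qed.
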